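(* Let $O$ be the regular octahedron in $\mathbb{R}^3$, with its $6$ vertices and $12$ edges, and let $G_O$ be its rotation group (isomorphic to $S_4$, of order $24$). The number of $G_O$-orbits of incomplete open octahedra (as defined in the context) is exactly $185$.
   Context: Let $P$ be a convex polyhedron in $\mathbb{R}^3$ with vertex set $V$ and edge set $E$ (each edge a pair of vertices). For a subset $S\subseteq E$, let $V(S)$ be the set of vertices incident to at least one edge of $S$, and let $\Gamma(S)$ be the graph with vertex set $V(S)$ and edge set $S$. An incomplete open $P$ is a subset $S\subseteq E$ such that: (i) $S\neq\emptyset$ and $S\neq E$; (ii) $\Gamma(S)$ is connected; (iii) $S$ is non-planar, i.e. the points of $V(S)$ (as points of $\mathbb{R}^3$) are not all contained in a single affine plane. The rotation group of $P$ (orientation-preserving isometries of $\mathbb{R}^3$ mapping $P$ to itself) permutes $V$ and $E$, and hence acts on subsets of $E$; this action preserves the property of being an incomplete open $P$. Incomplete open $P$ are counted up to this action, i.e. one counts orbits; two mirror-image subsets not related by a rotation are counted separately. *)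

From HB Require Import structures.
From mathcomp Require Import all_boot all_order all_algebra fingroup perm.
From mathcomp Require Import boolp reals.
Set Implicit Arguments. Unset Strict Implicit. Unset Printing Implicit Defensive.
Import Order.TTheory GRing.Theory Num.Theory.
Local Open Scope ring_scope.

(* Regular octahedron O = conv{±e1, ±e2, ±e3}.  Vertices are indexed by 'I_6:
   vertex i lies on axis i./2, with sign + if i is even and - if i is odd.   *)
Definition oct_vert (R : realType) (i : 'I_6) : 'rV[R]_3 :=
  \row_(k < 3) (if (k : nat) == (i : nat)./2 then (if odd i then -1 else 1) else 0).

(* Edges of O: unordered pairs {i,j} of distinct, non-antipodal vertices
   (antipodal = same axis).  There are 12 of them. *)
Definition oct_edges : {set {set 'I_6}} :=
  [set e : {set 'I_6} | [exists i : 'I_6, exists j : 'I_6,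
      (e == [set i; j]) && ((i : nat)./2 != (j : nat)./2)]].

Definition Vset (S : {set {set 'I_6}}) : {set 'I_6} := \bigcup_(e in S) e.

Definition adjS (S : {set {set 'I_6}}) : rel 'I_6 :=
  fun x y => [set x; y] \in S.

Definition Gamma_connected (S : {set {set 'I_6}}) : Prop :=
  forall x y, x \in Vset S -> y \in Vset S -> connect (adjS S) x y.

Definition dotR (R : realType) (u v : 'rV[R]_3) : R := \sum_(k < 3) u 0 k * v 0 k.

Definition planar (R : realType) (S : {set {set 'I_6}}) : Prop :=
  exists (n : 'rV[R]_3) (c : R),
    n != 0 /\ forall i, i \in Vset S -> dotR n (oct_vert R i) = c.

Definition incomplete_open (R : realType) (S : {set {set 'I_6}}) : Prop :=
  [/\ S \subset oct_edges, S != set0, S != oct_edges,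
      Gamma_connected S & ~ planar R S].

Definition is_rotation (R : realType) (g : {perm 'I_6}) : Prop :=
  exists (M : 'M[R]_3) (b : 'rV[R]_3),
    [/\ M *m M^T = 1%:M, \det M = 1 &
        forall i, oct_vert R i *m M + b = oct_vert R (g i)].

Definition rotations (R : realType) : {set {perm 'I_6}} :=
  [set g | `[< is_rotation R g >]].

Definition act_edges (g : {perm 'I_6}) (S : {set {set 'I_6}}) : {set {set 'I_6}} :=
  [set g @: (e : {set 'I_6}) | e in S].

Definition rot_orbit (R : realType) (S : {set {set 'I_6}}) : {set {set {set 'I_6}}} :=
  [set act_edges g S | g in rotations R].

Definition incomplete_opens (R : realType) : {set {set {set 'I_6}}} :=
  [set S | `[< incomplete_open R S >]].

(* An edge set S of the octahedron is determined by its 12 edge bits, and each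
   condition defining an incomplete open octahedron is decidable on them:
   connectivity by depth-first search, and non-planarity because the vertex set
   of S affinely spans space exactly when it contains an antipodal pair and
   meets all three axes.  A vertex permutation comes from a rotation iff it
   commutes with the antipodal map and the signed permutation matrix sending
   e_k to the image of +e_k has determinant 1; the translation part of such an
   isometry vanishes because the vertices sum to 0.  This lists the 24
   rotations explicitly.  The orbit of S is then encoded by the sorted list of
   the edge bits of its images, and the 3627 incomplete open edge sets give
   185 distinct lists. *)

From HB Require Import structures.
From mathcomp Require Import all_boot all_order all_algebra fingroup perm.
From mathcomp Require Import boolp reals ring lra.
Set Implicit Arguments. Unset Strict Implicit. Unset Printing Implicit Defensive.
Import Order.TTheory GRing.Theory Num.Theory Order.DefaultSeqLexiOrder.

Fixpoint subseqs (T : Type) (s : seq T) : seq (seq T) :=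
  if s is x :: s' then let r := subseqs s' in r ++ map (cons x) r else [:: [::]].

Lemma filter_subseqs (T : eqType) (a : pred T) (s : seq T) :
  filter a s \in subseqs s.
Proof.
elim: s => [|x s IH] //=; rewrite mem_cat.
by case: (a x); rewrite ?map_f ?IH ?orbT.
Qed.

Lemma subseqs_sub (T : eqType) (s t : seq T) : t \in subseqs s -> {subset t <= s}.
Proof.
elim: s t => [|x s IH] t /=; first by rewrite inE => /eqP ->.
rewrite mem_cat => /orP [] => [/IH sub y ty | /mapP [t' /IH sub ->] y].
  by rewrite inE sub ?orbT.
by rewrite !inE => /orP [->|/sub ->]; rewrite ?orbT.
Qed.

(* Same elements as [undup s], but each item is only compared with the distinct
   items kept so far, which is much faster when [s] has few distinct values. *)
Definition dedup (T : eqType) (s : seq T) : seq T :=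
  foldr (fun x acc => if x \in acc then acc else x :: acc) [::] s.

Lemma size_dedup (T : eqType) (s : seq T) : size (dedup s) = size (undup s).
Proof.
have [dedup_uniq mem_dedup] : uniq (dedup s) /\ dedup s =i s.
  elim: s => [|x s [IHu IHm]]; first by [].
  rewrite /=; case: ifP => [xs|/negbT xs].
    by split=> // y; rewrite inE -IHm; case: eqP => // ->.
  by split=> [|y]; rewrite /= ?IHu ?andbT ?inE ?IHm // -IHm.
by apply/perm_size/uniq_perm; rewrite ?undup_uniq // => y; rewrite mem_undup.
Qed.

Lemma size_undup_map (T U V : eqType) (f : T -> U) (g : T -> V) (s : seq T) :
  {in s &, forall x y, (f x == f y) = (g x == g y)} ->
  size (undup (map f s)) = size (undup (map g s)).
Proof.
elim: s => [|x s IH] //= fg.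
have fg' : {in s &, forall x y, (f x == f y) = (g x == g y)}.
  by move=> y z ys zs; apply: fg; rewrite inE ?ys ?zs orbT.
have -> : (f x \in map f s) = (g x \in map g s).
  have xy y : y \in s -> (f x == f y) = (g x == g y).
    by move=> ys; apply: fg; rewrite inE ?eqxx ?ys ?orbT.
  by apply/mapP/mapP => -[y ys /eqP]; [rewrite xy | rewrite -xy] => // /eqP; exists y.
by case: (g x \in map g s); rewrite /= IH.
Qed.

Lemma sort_undupP (T : eqType) (le : rel T) (s t : seq T) :
  total le -> transitive le -> antisymmetric le ->
  reflect (s =i t) (sort le (undup s) == sort le (undup t)).
Proof.
move=> le_total le_trans le_anti; apply: (iffP eqP) => [E x|st].
  by rewrite -mem_undup -(mem_sort le) E mem_sort mem_undup.
apply/perm_sortP => //; apply: uniq_perm; rewrite ?undup_uniq // => x.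
by rewrite !mem_undup.
Qed.

Lemma map_enum_inj (T : finType) (U : eqType) (f : T -> U) (A B : {set T}) :
  {in A :|: B &, injective f} ->
  map f (enum A) =i map f (enum B) -> A = B.
Proof.
move=> inj_f AB; apply/setP.
suff sub (X Y : {set T}) : X \subset A :|: B -> Y \subset A :|: B ->
    map f (enum X) =i map f (enum Y) -> {subset X <= Y}.
  by move=> x; apply/idP/idP; apply: sub; rewrite ?subsetUl ?subsetUr.
move=> /subsetP XAB /subsetP YAB XY x Xx.
have /mapP [y] : f x \in map f (enum Y) by rewrite -XY map_f ?mem_enum.
by rewrite mem_enum => Yy /inj_f -> //; [apply: XAB | apply: YAB].
Qed.

Lemma card_imset_seq (aT rT : finType) (f : aT -> rT) (A : {set aT}) (s : seq aT) :
  A =i s -> #|f @: A| = size (undup (map f s)).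
Proof.
move=> As; rewrite -(card_uniqP (undup_uniq _)); apply: eq_card => y.
by rewrite mem_undup; apply/imsetP/mapP => -[x xA ->]; exists x; rewrite ?As // -As.
Qed.

(* Unlike [enum 'I_n], this enumeration is evaluated by [vm_compute]. *)
Fixpoint ord_seq n : seq 'I_n :=
  if n is n'.+1 then ord0 :: map (lift ord0) (ord_seq n') else [::].

Lemma ord_seqE n : ord_seq n = enum 'I_n.
Proof. by elim: n => [|n IH]; rewrite ?enum_ord0 // enum_ordSl /= IH. Qed.

Lemma dfs_connect (T : finType) (g : T -> seq T) x y :
  (y \in dfs g #|T| [::] x) = connect (grel g) x y.
Proof. by apply/dfsP/connectP. Qed.

Lemma eq_set2 (T : finType) (a b c d : T) :
  ([set a; b] == [set c; d]) = ((a, b) == (c, d)) || ((a, b) == (d, c)).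
Proof.
apply/eqP/orP => [E|[] /eqP [-> ->] //]; last exact: setUC.
have mem x : (x \in [set a; b]) = (x \in [set c; d]) by rewrite E.
move: (mem a) (mem b) (mem c) (mem d); rewrite !inE !eqxx /= ?orbT.
by move=> /esym/orP[]/eqP ? /esym/orP[]/eqP ? /orP[]/eqP ? /orP[]/eqP ?;
  subst; rewrite eqxx; auto.
Qed.

Implicit Types (S : {set {set 'I_6}}) (ps : seq ('I_6 * 'I_6)).

Definition verts : seq 'I_6 := ord_seq 6.

Lemma mem_verts i : i \in verts.
Proof. by rewrite /verts ord_seqE mem_enum. Qed.

Lemma uniq_verts : uniq verts.
Proof. by rewrite /verts ord_seqE enum_uniq. Qed.

Lemma size_verts : size verts = 6.
Proof. by rewrite /verts ord_seqE size_enum_ord. Qed.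

Lemma nth_verts (x0 i : 'I_6) : nth x0 verts i = i.
Proof. by rewrite /verts ord_seqE nth_ord_enum. Qed.

Fact antipode_subproof (i : 'I_6) : (if odd i then i.-1 else i.+1) < 6.
Proof. by case: i => -[|[|[|[|[|[|]]]]]]. Qed.

Definition antipode (i : 'I_6) : 'I_6 := Ordinal (antipode_subproof i).

Lemma antipodeK : involutive antipode.
Proof. by case=> -[|[|[|[|[|[|]]]]]] // ?; apply: val_inj. Qed.

Lemma eq_antipode i : (i == antipode i) = false.
Proof. by case: i => -[|[|[|[|[|[|]]]]]]. Qed.

Lemma same_axis (i j : 'I_6) : (i./2 == j./2) = (i == j) || (i == antipode j).
Proof. by case: i => -[|[|[|[|[|[|]]]]]] // ?; case: j => -[|[|[|[|[|[|]]]]]]. Qed.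

Fact pos_vert_subproof (k : 'I_3) : k.*2 < 6.
Proof. by case: k => -[|[|[|]]]. Qed.

Definition pos_vert (k : 'I_3) : 'I_6 := Ordinal (pos_vert_subproof k).

Lemma eq_pos_vert k l : (pos_vert k == pos_vert l) = (k == l).
Proof. by rewrite -!val_eqE /= (inj_eq double_inj). Qed.

Lemma pos_vert_antipode k l : pos_vert k != antipode (pos_vert l).
Proof.
rewrite -val_eqE /= odd_double; apply/eqP => /(congr1 odd) /=.
by rewrite !odd_double.
Qed.

Lemma vert_cases i : exists k, i = pos_vert k \/ i = antipode (pos_vert k).
Proof.
have lt3 : i./2 < 3 by case: i => -[|[|[|[|[|[|]]]]]].
exists (Ordinal lt3); case: i lt3 => -[|[|[|[|[|[|]]]]]] // ? ?;
by [left; apply: val_inj | right; apply: val_inj].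
Qed.

Definition oct_pairs : seq ('I_6 * 'I_6) :=
  [seq p : 'I_6 * 'I_6 <- [seq (x, y) | x <- verts, y <- verts] |
     (p.1 < p.2) && (p.1./2 != p.2./2)].

Lemma mem_oct_pairs p : (p \in oct_pairs) = (p.1 < p.2) && (p.1./2 != p.2./2).
Proof. by case: p => x y; rewrite mem_filter (allpairs_f pair) ?mem_verts // andbT. Qed.

Definition edges_of (ps : seq ('I_6 * 'I_6)) : {set {set 'I_6}} :=
  [set [set p.1; p.2] | p in ps].

Lemma adjS_edges_of ps x y : adjS (edges_of ps) x y = ((x, y) \in ps) || ((y, x) \in ps).
Proof.
apply/imsetP/orP => [[[a b] ab /eqP]|[xy|yx]].
- by rewrite eq_set2 => /orP [] /eqP [-> ->]; [left | right].
- by exists (x, y).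
- by exists (y, x); rewrite // setUC.
Qed.

Lemma oct_edgesE : oct_edges = edges_of oct_pairs.
Proof.
apply/setP => e; rewrite inE.
apply/existsP/imsetP => [[i /existsP [j /andP [/eqP -> ax]]]|].
  have [ij|ji|eij] := ltngtP i j.
  - by exists (i, j); rewrite // mem_oct_pairs ij ax.
  - by exists (j, i); rewrite 1?setUC // mem_oct_pairs ji eq_sym ax.
  - by move: ax; rewrite eij eqxx.
case=> -[x y]; rewrite mem_oct_pairs => /andP [_ ax] ->.
by exists x; apply/existsP; exists y; rewrite eqxx ax.
Qed.

Lemma adjS_sym S : symmetric (adjS S).
Proof. by move=> x y; rewrite /adjS setUC. Qed.

Definition reach (a : rel 'I_6) x y : bool :=
  y \in dfs (fun z => [seq w <- verts | a z w]) 6 [::] x.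

Lemma reachE a : reach a =2 connect a.
Proof.
move=> x y; have := dfs_connect (fun z => [seq w <- verts | a z w]) x y.
rewrite card_ord /reach => ->; apply: eq_connect => z w.
change ((w \in [seq w <- verts | a z w]) = a z w).
by rewrite mem_filter mem_verts andbT.
Qed.

Definition connected_rel (a : rel 'I_6) : bool :=
  if [seq x <- verts | has (a x) verts] is x0 :: _ then
    all (fun y => has (a y) verts ==> reach a x0 y) verts
  else true.

Lemma connected_relP a : symmetric a ->
  reflect (forall x y, has (a x) verts -> has (a y) verts -> connect a x y)
          (connected_rel a).
Proof.
move=> a_sym; rewrite /connected_rel.
case Ev: [seq x <- verts | has (a x) verts] => [|x0 s].
  constructor=> x y ax; have : x \in [seq x <- verts | has (a x) verts].
    by rewrite mem_filter ax mem_verts.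
  by rewrite Ev.
have ax0 : has (a x0) verts.
  by have := mem_head x0 s; rewrite -Ev mem_filter => /andP [].
apply: (iffP allP) => [reach0 x y ax ay|conn y _].
  have r0 y' : has (a y') verts -> connect a x0 y'.
    by move=> ay'; rewrite -reachE; apply: (implyP (reach0 y' (mem_verts y'))).
  by apply: connect_trans (r0 y ay); rewrite sym_connect_sym // r0.
by apply/implyP => ay; rewrite reachE conn.
Qed.

Section SubsetsOfEdges.

Variable S : {set {set 'I_6}}.
Hypothesis S_oct : S \subset oct_edges.

Lemma mem_Vset i : (i \in Vset S) = has (adjS S i) verts.
Proof.
apply/bigcupP/hasP => [[e eS]|[j _ ij]]; last by exists [set i; j]; rewrite ?set21.
have := subsetP S_oct e eS; rewrite oct_edgesE => /imsetP [[x y] _ Ee].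
subst e; case/set2P => ->; [exists y | exists x]; rewrite ?mem_verts //.
by rewrite /adjS setUC.
Qed.

Lemma edges_of_adjS : edges_of [seq p <- oct_pairs | adjS S p.1 p.2] = S.
Proof.
apply/setP => e; apply/imsetP/idP => [[p]|eS].
  by rewrite mem_filter => /andP [pS _] ->.
have := subsetP S_oct e eS; rewrite oct_edgesE => /imsetP [p po Ep].
by exists p; rewrite // mem_filter po andbT /adjS -Ep.
Qed.

Lemma edge_set0 : (S != set0) = has (fun p => adjS S p.1 p.2) oct_pairs.
Proof.
apply/set0Pn/hasP => [[e eS]|[p _ pS]]; last by exists [set p.1; p.2].
have := subsetP S_oct e eS; rewrite oct_edgesE => /imsetP [p po Ep].
by exists p; rewrite // /adjS -Ep.
Qed.

Lemma edge_setT : (S != oct_edges) = ~~ all (fun p => adjS S p.1 p.2) oct_pairs.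
Proof.
rewrite eqEsubset S_oct andTb; congr negb; rewrite oct_edgesE.
apply/subsetP/allP => [sub p po|all_p e /imsetP [p po ->]]; last exact: all_p.
by apply: sub; apply/imsetP; exists p.
Qed.

Lemma Gamma_connectedE : Gamma_connected S <-> connected_rel (adjS S).
Proof.
rewrite /Gamma_connected; split => [conn|/(connected_relP (adjS_sym S)) conn x y].
  by apply/(connected_relP (adjS_sym S)) => x y; rewrite -!mem_Vset; apply: conn.
by rewrite !mem_Vset; apply: conn.
Qed.

End SubsetsOfEdges.

Definition spanning (A : pred 'I_6) : bool :=
  has (fun i => A i && A (antipode i)) verts && all (fun i => A i || A (antipode i)) verts.

Section Geometry.

Variable R : realType.
Local Open Scope ring_scope.
Implicit Types (i j : 'I_6) (u v : 'rV[R]_3).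

Lemma dotRN u v : dotR u (- v) = - dotR u v.
Proof. by rewrite /dotR -sumrN; apply: eq_bigr => k _; rewrite mxE mulrN. Qed.

Lemma dotR_suml (I : finType) (P : pred I) (F : I -> 'rV[R]_3) v :
  dotR (\sum_(x | P x) F x) v = \sum_(x | P x) dotR (F x) v.
Proof.
rewrite /dotR exchange_big; apply: eq_bigr => k _.
by rewrite summxE mulr_suml.
Qed.

Lemma dotR_delta u k : dotR u (delta_mx 0 k) = u 0 k.
Proof.
rewrite /dotR (bigD1 k) //= big1 ?addr0 => [|l lk]; rewrite mxE eqxx ?(negbTE lk) ?mulr0 //.
by rewrite eqxx mulr1.
Qed.

Lemma oct_vert_antipode i : oct_vert R (antipode i) = - oct_vert R i.
Proof.
by apply/rowP => k; rewrite !mxE; case: i => -[|[|[|[|[|[|]]]]]] //= _;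
  case: ifP; rewrite ?opprK ?oppr0.
Qed.

Lemma oct_vert_pos k : oct_vert R (pos_vert k) = delta_mx 0 k.
Proof.
by apply/rowP => l; rewrite !mxE /= doubleK odd_double -val_eqE; case: eqP.
Qed.

Lemma dotRC u v : dotR u v = dotR v u.
Proof. by apply: eq_bigr => k _; rewrite mulrC. Qed.

Lemma dotNR u v : dotR (- u) v = - dotR u v.
Proof. by rewrite dotRC dotRN dotRC. Qed.

Lemma dot_oct_vert i j :
  dotR (oct_vert R i) (oct_vert R j) = (i == j)%:R - (i == antipode j)%:R.
Proof.
have dot_pos k l : dotR (oct_vert R (pos_vert k)) (oct_vert R (pos_vert l)) = (k == l)%:R.
  by rewrite !oct_vert_pos dotR_delta mxE eqxx eq_sym.
have pa k l : (pos_vert k == antipode (pos_vert l)) = false.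
  exact: negbTE (pos_vert_antipode k l).
have ap k l : (antipode (pos_vert k) == pos_vert l) = false by rewrite eq_sym pa.
have [k [->|->]] := vert_cases i; have [l [->|->]] := vert_cases j;
by rewrite ?oct_vert_antipode ?dotNR ?dotRN ?opprK dot_pos ?antipodeK
  ?(inj_eq (can_inj antipodeK)) ?eq_pos_vert ?pa ?ap ?subr0 ?sub0r.
Qed.

Lemma dot0R v : dotR 0 v = 0.
Proof. by rewrite /dotR big1 // => k _; rewrite mxE mul0r. Qed.

Lemma oct_vert_neq0 i : oct_vert R i != 0.
Proof.
apply/eqP => v0; have := dot_oct_vert i i.
by rewrite {1}v0 dot0R eqxx eq_antipode subr0 => /eqP; rewrite eq_sym oner_eq0.
Qed.

Lemma coplanarP (A : pred 'I_6) :
  (exists (n : 'rV[R]_3) (c : R), n != 0 /\ forall i, A i -> dotR n (oct_vert R i) = c)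
  <-> ~~ spanning A.
Proof.
split=> [[n [c [n0 An]]]|].
  apply/negP => /andP [/hasP [i0 _ /andP [A0 A0']] /allP Aall].
  have c0 : c = 0.
    by have := An _ A0'; rewrite oct_vert_antipode dotRN (An _ A0) => ?; lra.
  have perp i : dotR n (oct_vert R i) = 0.
    have /orP [/An -> //|/An] := Aall i (mem_verts i).
    by rewrite oct_vert_antipode dotRN c0 => /eqP; rewrite oppr_eq0 => /eqP.
  by move/negP: n0; apply; apply/eqP/rowP => k; rewrite mxE -dotR_delta -oct_vert_pos perp.
(* A vertex on an axis missed by A is normal to a plane through 0 containing A;
   otherwise the sum of the vertices in A has dot product 1 with each of them. *)
rewrite negb_and => nspan.
have [allQ|/allPn [i0 _]] := boolP (all (fun i => A i || A (antipode i)) verts); last first.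
  rewrite negb_or => /andP [nA0 nA0']; exists (oct_vert R i0), 0; split=> [|i Ai].
    exact: oct_vert_neq0.
  have [i0i|ni] := eqVneq i0 i; first by rewrite i0i Ai in nA0.
  have [i0i|nai] := eqVneq i0 (antipode i); first by rewrite i0i antipodeK Ai in nA0'.
  by rewrite dot_oct_vert (negbTE ni) (negbTE nai) subrr.
move: nspan; rewrite allQ orbF => /hasPn noanti.
have dot_sum j : A j -> dotR (\sum_(i | A i) oct_vert R i) (oct_vert R j) = 1.
  move=> Aj; rewrite dotR_suml (bigD1 j) //= big1 => [|i /andP [Ai ij]].
    by rewrite dot_oct_vert eqxx eq_antipode subr0 addr0.
  rewrite dot_oct_vert (negbTE ij); case: eqP => [iaj|_]; rewrite ?subrr //.
  by have := noanti j (mem_verts j); rewrite Aj -iaj Ai.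
have [j Aj] : exists j, A j.
  have /orP [A0|A0'] := allP allQ ord0 (mem_verts ord0).
    by exists ord0.
  by exists (antipode ord0).
exists (\sum_(i | A i) oct_vert R i), 1; split=> [|i /dot_sum //].
by apply/eqP => n0; have := dot_sum j Aj; rewrite n0 dot0R => /eqP; rewrite eq_sym oner_eq0.
Qed.

Lemma oct_vert_inj : injective (oct_vert R).
Proof.
move=> i j vij; apply/eqP; have := dot_oct_vert i j.
rewrite -vij dot_oct_vert eqxx eq_antipode.
by case: (i == j) => //; case: (i == antipode j) => /= h; clear vij; lra.
Qed.

Lemma sum_oct_vert : \sum_i oct_vert R i = 0.
Proof.
have /eqP : \sum_i oct_vert R i = - \sum_i oct_vert R i.
  rewrite {1}(reindex_inj (can_inj antipodeK)) -sumrN.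
  by apply: eq_bigr => i _; rewrite oct_vert_antipode.
by rewrite -addr_eq0 -mulr2n -scaler_nat scaler_eq0 pnatr_eq0 => /eqP.
Qed.

Definition rot_mx (g : {perm 'I_6}) : 'M[R]_3 :=
  \matrix_(k < 3) oct_vert R (g (pos_vert k)).

Lemma oct_vert_pos_mul (M : 'M[R]_3) k : oct_vert R (pos_vert k) *m M = row k M.
Proof. by rewrite oct_vert_pos rowE. Qed.

Lemma is_rotationP g :
  is_rotation R g <-> {morph g : i / antipode i} /\ \det (rot_mx g) = 1.
Proof.
split=> [[M [b [_ detM gM]]]|[g_ant det1]].
  (* Summing over the vertices, which add up to 0, leaves 6 b = 0. *)
  have b0 : b = 0.
    have sum_g : \sum_i oct_vert R (g i) = 0.
      by rewrite -[RHS]sum_oct_vert; symmetry; apply: (reindex_inj (@perm_inj _ g)).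
    have : \sum_i (oct_vert R i *m M + b) = 0.
      by rewrite -[RHS]sum_g; apply: eq_bigr => i _; apply: gM.
    rewrite big_split /= -mulmx_suml sum_oct_vert mul0mx.
    rewrite add0r sumr_const card_ord -scaler_nat => /eqP.
    by rewrite scaler_eq0 pnatr_eq0 => /eqP.
  have vM i : oct_vert R i *m M = oct_vert R (g i) by rewrite -gM b0 addr0.
  split=> [i|].
    by apply: oct_vert_inj; rewrite oct_vert_antipode -!vM oct_vert_antipode mulNmx.
  suff -> : rot_mx g = M by [].
  by apply/row_matrixP => k; rewrite rowK -vM oct_vert_pos_mul.
have vM i : oct_vert R i *m rot_mx g = oct_vert R (g i).
  have [k [->|->]] := vert_cases i;
    rewrite ?oct_vert_antipode ?mulNmx oct_vert_pos_mul rowK //.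
  by rewrite g_ant oct_vert_antipode.
exists (rot_mx g), 0; split=> // [|i]; last by rewrite addr0 vM.
apply/matrixP => k l; rewrite !mxE.
transitivity (dotR (oct_vert R (g (pos_vert k))) (oct_vert R (g (pos_vert l)))).
  by apply: eq_bigr => m _; rewrite !mxE.
rewrite dot_oct_vert -g_ant !(inj_eq (@perm_inj _ g)) eq_pos_vert.
by rewrite (negbTE (pos_vert_antipode _ _)) subr0.
Qed.

Lemma is_rotationV g : is_rotation R g -> is_rotation R g^-1%g.
Proof.
case=> M [b [MMt detM gM]]; exists M^T, (- (b *m M^T)); split.
- by rewrite trmxK; apply: mulmx1C.
- by rewrite det_tr.
- move=> i; have := gM (g^-1%g i); rewrite permKV => <-.
  by rewrite mulmxDl -mulmxA MMt mulmx1 addrK.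
Qed.

End Geometry.

Local Open Scope ring_scope.

Definition det3 (R : pzRingType) (a : nat -> nat -> R) : R :=
  a 0%N 0%N * a 1%N 1%N * a 2%N 2%N + a 0%N 1%N * a 1%N 2%N * a 2%N 0%N
  + a 0%N 2%N * a 1%N 0%N * a 2%N 1%N - a 0%N 2%N * a 1%N 1%N * a 2%N 0%N
  - a 0%N 0%N * a 1%N 2%N * a 2%N 1%N - a 0%N 1%N * a 1%N 0%N * a 2%N 2%N.

Lemma det_mx33 (R : comNzRingType) (A : 'M[R]_3) :
  \det A = det3 (fun i j => A (inord i) (inord j)).
Proof.
pose a i j := A (inord i) (inord j).
have Ae x y : A x y = a x y by rewrite /a !inord_val.
rewrite (expand_det_row _ ord0) !big_ord_recr big_ord0 /cofactor.
rewrite !(@expand_det_row _ 2 _ ord0) !big_ord_recr !big_ord0 /cofactor !det_mx11.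
by rewrite !mxE !Ae /det3 /a /bump /=; ring.
Qed.

Definition vert_coord (R : pzRingType) (i : 'I_6) (l : nat) : R :=
  if l == i./2 then (if odd i then -1 else 1) else 0.

Local Close Scope ring_scope.

Definition perm_table (g : {perm 'I_6}) : seq 'I_6 := [seq g i | i <- verts].

Lemma nth_perm_table g x0 (i : 'I_6) : nth x0 (perm_table g) i = g i.
Proof. by rewrite (nth_map i) ?size_verts // nth_verts. Qed.

Definition table_det (f : seq 'I_6) : int :=
  det3 (fun k l => vert_coord int (nth ord0 f k.*2) l).

Lemma det_rot_mx (R : realType) g : (\det (rot_mx R g) = (table_det (perm_table g))%:~R)%R.
Proof.
have entry k l : k < 3 -> l < 3 ->
    rot_mx R g (inord k) (inord l) =
    ((vert_coord int (nth ord0 (perm_table g) k.*2) l)%:~R)%R.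
  move=> k3 l3; have -> : k.*2 = pos_vert (inord k) by rewrite /= inordK.
  rewrite nth_perm_table !mxE inordK // /vert_coord.
  by case: ifP => // _; case: ifP.
by rewrite det_mx33 /table_det /det3 !intrB !intrD !intrM !entry.
Qed.

Definition rotation_table (f : seq 'I_6) : bool :=
  all (fun i => nth ord0 f (antipode i) == antipode (nth ord0 f i)) verts
  && (table_det f == 1%R).

Lemma rotationsE R g : (g \in rotations R) = rotation_table (perm_table g).
Proof.
rewrite inE; apply/asboolP/andP => [/is_rotationP [g_ant det1]|[g_ant det1]];
  [split | apply/is_rotationP; split].
- by apply/allP => i _; rewrite !nth_perm_table g_ant.
- by rewrite -(eqr_int R) -det_rot_mx det1.
- by move=> i; apply/eqP; have := allP g_ant i (mem_verts i); rewrite !nth_perm_table.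
- by rewrite det_rot_mx (eqP det1).
Qed.

Lemma rotations_antipode R g : g \in rotations R -> {morph g : i / antipode i}.
Proof. by rewrite inE => /asboolP /is_rotationP []. Qed.

Lemma rotationsV R g : g \in rotations R -> g^-1%g \in rotations R.
Proof. by rewrite !inE => /asboolP /is_rotationV /asboolP. Qed.

Lemma perm_table_permutations g : perm_table g \in permutations verts.
Proof.
rewrite mem_permutations; apply: uniq_perm; rewrite ?uniq_verts //.
  by rewrite map_inj_uniq ?uniq_verts //; exact: perm_inj.
by move=> i; rewrite mem_verts; apply/mapP; exists (g^-1%g i); rewrite ?mem_verts ?permKV.
Qed.

Lemma perm_tableP f : f \in permutations verts -> exists g, perm_table g = f.
Proof.
rewrite mem_permutations => pf.
have sf : size f = 6 by rewrite (perm_size pf) size_verts.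
have uf : uniq f by rewrite (perm_uniq pf) uniq_verts.
have f_inj : injective (fun i : 'I_6 => nth i f i).
  move=> i j; rewrite (set_nth_default ord0 i) ?sf // (set_nth_default ord0 j) ?sf //.
  by move/eqP; rewrite nth_uniq ?sf // => /eqP /val_inj.
exists (perm f_inj); apply: (@eq_from_nth _ ord0).
  by rewrite size_map size_verts sf.
move=> k; rewrite size_map size_verts => k6.
by rewrite -[k]/(val (Ordinal k6)) nth_perm_table permE /= (set_nth_default ord0) ?sf.
Qed.

Definition rotation_tables : seq (seq 'I_6) :=
  [seq f <- permutations verts | rotation_table f].

Lemma mem_rot_tables R f :
  reflect (exists2 g, g \in rotations R & perm_table g = f) (f \in rotation_tables).
Proof.
apply: (iffP idP) => [|[g gR <-]].
  2: by rewrite mem_filter -(rotationsE R) gR perm_table_permutations.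
rewrite mem_filter => /andP [rf /perm_tableP [g tg]].
by exists g; rewrite // (rotationsE R) tg.
Qed.

Lemma act_edgesE g S e : (e \in act_edges g S) = (g^-1%g @: e \in S).
Proof.
have ge : g @: (g^-1%g @: e) = e.
  by rewrite -imset_comp (eq_imset _ (permKV g)) imset_id.
by rewrite -{1}ge /act_edges mem_imset //; apply: imset_inj; exact: perm_inj.
Qed.

Lemma act_edges_sub R g (S : {set {set 'I_6}}) :
  g \in rotations R -> S \subset oct_edges -> act_edges g S \subset oct_edges.
Proof.
move=> /rotations_antipode g_ant /subsetP S_oct; apply/subsetP => _ /imsetP [e eS ->].
have := S_oct e eS; rewrite !inE => /existsP [x /existsP [y /andP [/eqP -> xy]]].
apply/existsP; exists (g x); apply/existsP; exists (g y).
rewrite imsetU1 imset_set1 eqxx /= same_axis -g_ant !(inj_eq (@perm_inj _ g)).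
by rewrite -same_axis.
Qed.

Definition edge_bits (S : {set {set 'I_6}}) : seq bool :=
  [seq adjS S p.1 p.2 | p <- oct_pairs].

Lemma edge_bits_inj :
  {in [pred S : {set {set 'I_6}} | S \subset oct_edges] &, injective edge_bits}.
Proof.
move=> S T S_oct T_oct /eq_in_map eqST.
by rewrite -(edges_of_adjS S_oct) -(edges_of_adjS T_oct) (eq_in_filter eqST).
Qed.

Definition rot_bits (f : seq 'I_6) (a : rel 'I_6) : seq bool :=
  [seq a (nth ord0 f p.1) (nth ord0 f p.2) | p : 'I_6 * 'I_6 <- oct_pairs].

Lemma edge_bits_act g S : edge_bits (act_edges g^-1 S) = rot_bits (perm_table g) (adjS S).
Proof.
by apply: eq_map => p; rewrite /adjS act_edgesE invgK !nth_perm_table imsetU1 imset_set1.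
Qed.

Lemma rot_orbit_bits R S :
  [seq rot_bits f (adjS S) | f <- rotation_tables] =i
  [seq edge_bits T | T <- enum (rot_orbit R S)].
Proof.
move=> x; apply/mapP/mapP => [[f /(mem_rot_tables R) [g gR <-] ->]|[T]].
  exists (act_edges g^-1 S); rewrite ?edge_bits_act // mem_enum.
  by apply/imsetP; exists g^-1%g; rewrite ?rotationsV.
rewrite mem_enum => /imsetP [h hR ->] ->; exists (perm_table h^-1).
  by apply/(mem_rot_tables R); exists h^-1%g; rewrite ?rotationsV.
by rewrite -edge_bits_act invgK.
Qed.

Definition orbit_key (a : rel 'I_6) : seq (seq bool) :=
  sort <=%O (undup [seq rot_bits f a | f <- rotation_tables]).

Lemma eq_rot_orbit R (S T : {set {set 'I_6}}) :
  S \subset oct_edges -> T \subset oct_edges ->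
  (rot_orbit R S == rot_orbit R T) = (orbit_key (adjS S) == orbit_key (adjS T)).
Proof.
move=> S_oct T_oct; apply/eqP/sort_undupP;
  [exact: le_total | exact: le_trans | exact: le_anti | move=> ST x | move=> ST].
  by apply: etrans (rot_orbit_bits R S x) _; rewrite ST (rot_orbit_bits R T x).
apply: (map_enum_inj (f := edge_bits)) => [U V|x].
  have orbit_oct W : W \in rot_orbit R S :|: rot_orbit R T -> W \subset oct_edges.
    by case/setUP => /imsetP [g gR ->]; apply: act_edges_sub gR _.
  by move=> /orbit_oct U_oct /orbit_oct V_oct; apply: edge_bits_inj.
exact: etrans (esym (rot_orbit_bits R S x)) (etrans (ST x) (rot_orbit_bits R T x)).
Qed.

Definition incomplete_openb (a : rel 'I_6) : bool :=
  [&& has (fun p => a p.1 p.2) oct_pairs, ~~ all (fun p => a p.1 p.2) oct_pairs,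
      connected_rel a & spanning (fun i => has (a i) verts)].

Lemma incomplete_openP R S :
  S \subset oct_edges -> incomplete_open R S <-> incomplete_openb (adjS S).
Proof.
move=> S_oct; have planarE : planar R S <-> ~~ spanning (fun i => has (adjS S i) verts).
  rewrite -coplanarP; split=> -[n [c [n0 nS]]]; exists n, c; split=> // i.
    by rewrite -mem_Vset //; apply: nS.
  by rewrite mem_Vset //; apply: nS.
rewrite /incomplete_open /incomplete_openb -edge_set0 // -edge_setT //.
split=> [[_ -> -> conn npl]|/and4P [? ? conn span]].
  by rewrite (Gamma_connectedE S_oct).1 //; apply/negPn/negP => /planarE.
split=> //; first exact/Gamma_connectedE.
by move/planarE; rewrite span.
Qed.

Definition pairs_rel (ps : seq ('I_6 * 'I_6)) : rel 'I_6 :=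
  fun x y => ((x, y) \in ps) || ((y, x) \in ps).

(* The values of [a] are computed once and stored, so that [vm_compute] does
   not re-evaluate [a] at each lookup. *)
Definition tabulate (a : rel 'I_6) : rel 'I_6 :=
  let t := [seq [seq a x y | y <- verts] | x <- verts] in
  fun x y => nth false (nth [::] t x) y.

Lemma tabulateE a : tabulate a =2 a.
Proof.
move=> x y; rewrite /tabulate (nth_map x) ?size_verts // (nth_map y) ?size_verts //.
by rewrite !nth_verts.
Qed.

Lemma adjS_edges_ofE ps : adjS (edges_of ps) = tabulate (pairs_rel ps).
Proof. by apply/funext => x; apply/funext => y; rewrite tabulateE adjS_edges_of. Qed.

Lemma edges_of_sub ps : {subset ps <= oct_pairs} -> edges_of ps \subset oct_edges.
Proof.
move=> sub; rewrite oct_edgesE; apply/subsetP => _ /imsetP [p /sub po ->].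
by apply/imsetP; exists p.
Qed.

Definition incomplete_open_pairs : seq (seq ('I_6 * 'I_6)) :=
  [seq ps <- subseqs oct_pairs | incomplete_openb (tabulate (pairs_rel ps))].

Lemma incomplete_opensE R :
  incomplete_opens R =i [seq edges_of ps | ps <- incomplete_open_pairs].
Proof.
move=> S; rewrite inE; apply/asboolP/mapP => [ioS|[ps]].
  have S_oct : S \subset oct_edges by case: ioS.
  exists [seq p <- oct_pairs | adjS S p.1 p.2]; last by rewrite edges_of_adjS.
  rewrite mem_filter filter_subseqs -adjS_edges_ofE edges_of_adjS // andbT.
  exact/(incomplete_openP R S_oct).
rewrite mem_filter -adjS_edges_ofE => /andP [io /subseqs_sub /edges_of_sub ps_oct] ->.
exact/(incomplete_openP R ps_oct).
Qed.

Lemma orbit_count :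
  size (dedup [seq orbit_key (tabulate (pairs_rel ps)) | ps <- incomplete_open_pairs]) = 185.
Proof. vm_cast_no_check (erefl 185). Qed.

Theorem mainTheorem3 (R : realType) :
  #|[set rot_orbit R S | S in incomplete_opens R]| = 185.
Proof.
have io_oct S :
    S \in [seq edges_of ps | ps <- incomplete_open_pairs] -> S \subset oct_edges.
  by rewrite -(incomplete_opensE R) inE => /asboolP [].
rewrite (card_imset_seq _ (incomplete_opensE R)).
rewrite (@size_undup_map _ _ _ _ (fun S => orbit_key (adjS S))); last first.
  by move=> S T /io_oct S_oct /io_oct T_oct; apply: eq_rot_orbit.
rewrite -map_comp (eq_map (fun ps => congr1 orbit_key (adjS_edges_ofE ps))) -size_dedup.
exact: orbit_count.
Qed.
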